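(* Let $k\in\mathbb{Z}$, let $p$ be a positive integer and let $m$ be an odd positive integer. Then $$S_{p}^{(k)}(1,m)=\sum_{\nu=0}^{p}\binom{p}{\nu}E_{\nu}^{(k)}\sum_{i=0}^{p-\nu}\binom{p-\nu+1}{i}E_{i}m^{p-i},$$ where $S_p^{(k)}(1,m):=m^{p}T_{p}^{(k)}(1,m)-2\sum_{\nu=0}^{p}\binom{p}{\nu}E_{\nu}^{(k)}E_{p+1-\nu}m^{\nu-1}$.
   Context: Euler polynomials $E_n(x)$ are defined by $\frac{2}{e^t+1}e^{xt}=\sum_{n=0}^{\infty}E_n(x)\frac{t^n}{n!}$ and $E_n=E_n(0)$. For $k\in\mathbb{Z}$, $\mathrm{Ei}_k(x)=\sum_{n=1}^{\infty}\frac{x^n}{n^k(n-1)!}$; the poly-Genocchi polynomials $G_n^{(k)}(x)$ are defined by $\frac{2\,\mathrm{Ei}_k(\log(1+t))}{e^t+1}e^{xt}=\sum_{n=0}^{\infty}G_n^{(k)}(x)\frac{t^n}{n!}$; the poly-Euler polynomials are $E_n^{(k)}(x)=\frac{G_{n+1}^{(k)}(x)}{n+1}$ ($n\ge0$), $E_n^{(k)}=E_n^{(k)}(0)$, and the poly-Euler functions are $\overline{E}_n^{(k)}(x)=E_n^{(k)}(x-[x])$, where $[x]$ is the greatest integer $\le x$. For positive integers $h,m,p$, the poly-Dedekind type DC sum is $T_p^{(k)}(h,m)=2\sum_{\mu=1}^{m-1}(-1)^{\mu}\frac{\mu}{m}\overline{E}_p^{(k)}\big(\frac{h\mu}{m}\big)$.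 *)

(* Generating functions are treated as formal power series
   (sequences nat -> R of coefficients of t^n). *)
From mathcomp Require Import all_boot all_order all_algebra.
Set Implicit Arguments. Unset Strict Implicit. Unset Printing Implicit Defensive.
Import Order.TTheory GRing.Theory Num.Theory.
Local Open Scope ring_scope.

Section FPS.
Variable R : archiRealFieldType.

Definition fps := nat -> R.

Definition fps_mul (f g : fps) : fps :=
  fun n => \sum_(i < n.+1) f i * g (n - i)%N.

Definition fps_scale (c : R) (f : fps) : fps := fun n => c * f n.

Fixpoint fps_pow (f : fps) (j : nat) : fps :=
  match j with
  | 0 => fun n => if n == 0%N then 1 else 0
  | j'.+1 => fps_mul f (fps_pow f j')
  end.

(* composition a(f(t)), for f with zero constant term *)
Definition fps_comp (a f : fps) : fps :=
  fun n => \sum_(j < n.+1) a j * fps_pow f j n.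

(* multiplicative inverse of a series with invertible constant term:
   list of the first n+1 coefficients *)
Fixpoint fps_inv_seq (f : fps) (n : nat) : seq R :=
  match n with
  | 0 => [:: (f 0%N)^-1]
  | n'.+1 => let s := fps_inv_seq f n' in
      rcons s (- (f 0%N)^-1 * \sum_(1 <= i < n'.+2) f i * nth 0 s (n'.+1 - i)%N)
  end.

Definition fps_inv (f : fps) : fps := fun n => nth 0 (fps_inv_seq f n) n.

Definition fps_exp (c : R) : fps := fun n => c ^+ n / (n`!)%:R.

Definition fps_expt_plus1 : fps :=
  fun n => fps_exp 1 n + (if n == 0%N then 1 else 0).

Definition fps_log1p : fps :=
  fun n => if n == 0%N then 0 else (-1) ^+ n.+1 / n%:R.

Definition fps_Ei (k : int) : fps :=
  fun n => if n == 0%N then 0 else ((n%:R ^ k) * ((n.-1)`!)%:R)^-1.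

Definition euler_poly (n : nat) (x : R) : R :=
  (n`!)%:R * fps_mul (fps_scale 2 (fps_inv fps_expt_plus1)) (fps_exp x) n.

Definition euler_num (n : nat) : R := euler_poly n 0.

Definition poly_genocchi (k : int) (n : nat) (x : R) : R :=
  (n`!)%:R * fps_mul (fps_mul (fps_scale 2 (fps_comp (fps_Ei k) fps_log1p))
                              (fps_inv fps_expt_plus1)) (fps_exp x) n.

Definition poly_euler (k : int) (n : nat) (x : R) : R :=
  poly_genocchi k n.+1 x / (n.+1)%:R.

Definition poly_euler_num (k : int) (n : nat) : R := poly_euler k n 0.

Definition poly_euler_fun (k : int) (n : nat) (x : R) : R :=
  poly_euler k n (x - (Num.floor x)%:~R).

Definition polyDC_T (k : int) (p h m : nat) : R :=
  2 * \sum_(1 <= mu < m) (-1) ^+ mu * (mu%:R / m%:R)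
        * poly_euler_fun k p ((h * mu)%:R / m%:R).

Definition polyDC_S (k : int) (p m : nat) : R :=
  m%:R ^+ p * polyDC_T k p 1 m
  - 2 * \sum_(nu < p.+1) 'C(p, nu)%:R * poly_euler_num k nu
          * euler_num (p.+1 - nu) * m%:R ^ (nu%:Z - 1).

End FPS.

From mathcomp Require Import all_boot all_order all_algebra.
From mathcomp Require Import ring lra zify.
Set Implicit Arguments. Unset Strict Implicit. Unset Printing Implicit Defensive.
Import Order.TTheory GRing.Theory Num.Theory.
Local Open Scope ring_scope.

(* Both E_n(x) and E_n^(k)(x) are Appell sequences, because their generating
   series are a fixed series times e^{xt}; for E^(k) this uses that the
   poly-Genocchi series has no constant term.  Since h = 1 and 0 <= mu/m < 1,
   the Appell expansion turns m^p T_p^(k)(1,m) into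
   sum_nu C(p,nu) E_nu^(k) m^(nu-1) * 2 sum_(0<mu<m) (-1)^mu mu^(p+1-nu).
   Telescoping E_n(x+1) + E_n(x) = 2 x^n evaluates the alternating power sum
   as E_n + E_n(m) for odd m; the correction term of S turns this into
   E_n(m) - E_n, whose Appell expansion is the right-hand side. *)

Lemma natr_fact_neq0 (R : numDomainType) n : n`!%:R != 0 :> R.
Proof. by rewrite pnatr_eq0 -lt0n fact_gt0. Qed.

Section FormalPowerSeries.
Variable R : archiRealFieldType.
Implicit Types (f g h : fps R) (x y : R).

Lemma fps_mul_rev f g n : fps_mul f g n = \sum_(j < n.+1) f (n - j)%N * g j.
Proof.
rewrite /fps_mul (reindex_inj rev_ord_inj) /=; apply: eq_bigr => j _.
by rewrite subSS subKn // -ltnS.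
Qed.

Lemma fps_mulC f g n : fps_mul f g n = fps_mul g f n.
Proof. by rewrite fps_mul_rev; apply: eq_bigr => j _; rewrite mulrC. Qed.

Lemma fps_mulA f g h n :
  fps_mul f (fps_mul g h) n = fps_mul (fps_mul f g) h n.
Proof.
rewrite [RHS]fps_mul_rev {1}/fps_mul.
pose coef3 i l := f i * (g (n - i - l)%N * h l).
transitivity (\sum_(i < n.+1) \sum_(l < n.+1 | (l <= n - i)%N) coef3 i l).
  apply: eq_bigr => i _; rewrite fps_mul_rev big_distrr /=.
  by rewrite (big_ord_narrow_leq (leq_subr _ _)).
rewrite (exchange_big_dep predT) //=; apply: eq_bigr => l _.
transitivity (\sum_(i < n.+1 | (i <= n - l)%N) coef3 i l).
  apply: eq_bigl => i; rewrite -ltnS -(ltnS i) -!subSn ?leq_ord //.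
  by rewrite -subn_gt0 -(subn_gt0 i) -!subnDA addnC.
rewrite (big_ord_narrow_leq (leq_subr _ _)) big_distrl /=.
by apply: eq_bigr => i _; rewrite /coef3 mulrA; congr (f _ * g _ * _); lia.
Qed.

Lemma fps_mul_exp0 f n : fps_mul f (fps_exp 0) n = f n.
Proof.
rewrite /fps_mul big_ord_recr /= subnn /fps_exp expr0 divr1 mulr1 big1 ?add0r //.
by move=> i _; rewrite expr0n subn_eq0 leqNgt ltn_ord /= mul0r mulr0.
Qed.

Lemma fps_expD x y n : fps_exp (x + y) n = fps_mul (fps_exp x) (fps_exp y) n.
Proof.
rewrite /fps_exp /fps_mul addrC exprDn mulr_suml; apply: eq_bigr => i _.
have le_in : (i <= n)%N by rewrite -ltnS.
rewrite -mulr_natr -(bin_fact le_in) !natrM.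
have binC_neq0 : 'C(n, i)%:R != 0 :> R by rewrite pnatr_eq0 -lt0n bin_gt0.
by field; rewrite binC_neq0 !natr_fact_neq0.
Qed.

Lemma fps_mul_expE f n x : n`!%:R * fps_mul f (fps_exp x) n =
  \sum_(j < n.+1) 'C(n, j)%:R * (j`!%:R * f j) * x ^+ (n - j).
Proof.
rewrite /fps_mul mulr_sumr; apply: eq_bigr => j _.
have le_jn : (j <= n)%N by rewrite -ltnS.
rewrite /fps_exp -(bin_fact le_jn) !natrM.
by field; rewrite natr_fact_neq0.
Qed.

Lemma size_fps_inv_seq f n : size (fps_inv_seq f n) = n.+1.
Proof. by elim: n => [|n IH] //=; rewrite size_rcons IH. Qed.

Lemma nth_fps_inv_seq f n i : (i <= n)%N -> nth 0 (fps_inv_seq f n) i = fps_inv f i.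
Proof.
move=> le_in; rewrite /fps_inv -(subnKC le_in).
elim: (n - i)%N => [|d IH]; first by rewrite addn0.
by rewrite addnS /= nth_rcons size_fps_inv_seq ltnS leq_addr.
Qed.

Lemma fps_mulV f n : f 0%N != 0 -> fps_mul f (fps_inv f) n = (n == 0%N)%:R.
Proof.
move=> f0_neq0; case: n => [|n]; first by rewrite /fps_mul big_ord1 /fps_inv /= mulfV.
rewrite /fps_mul big_ord_recl subn0.
have -> : fps_inv f n.+1 =
    - (f 0%N)^-1 * \sum_(1 <= i < n.+2) f i * fps_inv f (n.+1 - i)%N.
  rewrite /fps_inv /= nth_rcons size_fps_inv_seq ltnn eqxx; congr (_ * _).
  by rewrite !big_nat; apply: eq_bigr => i /andP[i_gt0 _]; rewrite nth_fps_inv_seq //; lia.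
rewrite big_add1 /= big_mkord.
by rewrite mulrA mulrN mulfV // mulN1r addrC subrr.
Qed.

Lemma fps_expt_plus1_mul g n :
  fps_mul (fps_expt_plus1 R) g n = fps_mul (fps_exp 1) g n + g n.
Proof.
rewrite /fps_mul /fps_expt_plus1.
under eq_bigr => i _ do rewrite mulrDl.
rewrite big_split /=; congr (_ + _).
by rewrite big_ord_recl subn0 mul1r big1 ?addr0 // => i _; rewrite mul0r.
Qed.

End FormalPowerSeries.

Section EulerPolynomials.
Variable R : archiRealFieldType.
Implicit Types (x : R).

Definition euler_gf : fps R := fps_scale 2 (fps_inv (fps_expt_plus1 R)).

Lemma euler_numE j : euler_num R j = j`!%:R * euler_gf j.
Proof. by rewrite /euler_num /euler_poly fps_mul_exp0. Qed.

Lemma euler_polyE n x :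
  euler_poly n x = \sum_(j < n.+1) 'C(n, j)%:R * euler_num R j * x ^+ (n - j).
Proof. by rewrite /euler_poly fps_mul_expE; apply: eq_bigr => j _; rewrite euler_numE. Qed.

Lemma euler_polyS_sub_num n x : euler_poly n.+1 x - euler_num R n.+1 =
  \sum_(i < n.+1) 'C(n.+1, i)%:R * euler_num R i * x ^+ (n.+1 - i).
Proof. by rewrite euler_polyE big_ord_recr /= subnn expr0 binn mulr1 mul1r addrK. Qed.

Lemma euler_gf_mul_expt_plus1 n :
  fps_mul euler_gf (fps_expt_plus1 R) n = 2 * (n == 0%N)%:R.
Proof.
have expt_plus1_0 : fps_expt_plus1 R 0%N != 0.
  by rewrite /fps_expt_plus1 /fps_exp /= expr0 divr1; apply/eqP; lra.
rewrite fps_mulC -(fps_mulV n expt_plus1_0) /fps_mul mulr_sumr.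
by apply: eq_bigr => i _; rewrite /euler_gf /fps_scale mulrCA.
Qed.

Lemma euler_polyD1 n x : euler_poly n (x + 1) + euler_poly n x = 2 * x ^+ n.
Proof.
rewrite /euler_poly -mulrDr -/euler_gf.
have -> : fps_mul euler_gf (fps_exp (x + 1)) n + fps_mul euler_gf (fps_exp x) n
    = fps_mul euler_gf (fps_mul (fps_expt_plus1 R) (fps_exp x)) n.
  rewrite {1 2 3}/fps_mul -big_split; apply: eq_bigr => i _ /=.
  by rewrite -mulrDr fps_expt_plus1_mul [x + 1]addrC fps_expD.
rewrite fps_mulA {1}/fps_mul big_ord_recl big1 => [|i _]; last first.
  by rewrite euler_gf_mul_expt_plus1 mulr0 mul0r.
rewrite euler_gf_mul_expt_plus1 subn0 mulr1 addr0 /fps_exp.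
by rewrite mulrCA [_ * (_ / _)]mulrCA mulfV ?mulr1 ?natr_fact_neq0.
Qed.

Lemma euler_alt_power_sum n M :
  2 * \sum_(i < M) (-1) ^+ i * i%:R ^+ n = euler_num R n - (-1) ^+ M * euler_poly n M%:R.
Proof.
elim: M => [|M IH]; first by rewrite big_ord0 mulr0 mul1r subrr.
have shift : euler_poly n (M.+1%:R : R) = 2 * M%:R ^+ n - euler_poly n M%:R.
  by rewrite -natr1 -euler_polyD1 addrK.
by rewrite big_ord_recr /= mulrDr IH shift exprS; ring.
Qed.

Lemma euler_alt_power_sum_odd n m : (0 < n)%N -> odd m ->
  2 * \sum_(1 <= mu < m) (-1) ^+ mu * mu%:R ^+ n = euler_num R n + euler_poly n m%:R.
Proof.
move=> n_gt0 m_odd; have m_gt0 : (0 < m)%N by case: m m_odd.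
have := euler_alt_power_sum n m; rewrite -signr_odd m_odd mulN1r opprK => <-.
rewrite -(big_mkord xpredT (fun i => (-1) ^+ i * i%:R ^+ n)) (big_ltn m_gt0).
by rewrite expr0n gtn_eqF // mulr0 add0r.
Qed.

End EulerPolynomials.

Section PolyEulerPolynomials.
Variable R : archiRealFieldType.
Variable k : int.
Implicit Types (x : R).

Definition genocchi_gf : fps R :=
  fps_mul (fps_scale 2 (fps_comp (fps_Ei R k) (fps_log1p R))) (fps_inv (fps_expt_plus1 R)).

Lemma genocchi_gf0 : genocchi_gf 0%N = 0.
Proof.
by rewrite /genocchi_gf /fps_mul big_ord1 /fps_scale /fps_comp big_ord1 /fps_Ei /=
  !mul0r mulr0 mul0r.
Qed.

Lemma poly_euler_numE j : poly_euler_num R k j = j`!%:R * genocchi_gf j.+1.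
Proof.
rewrite /poly_euler_num /poly_euler /poly_genocchi -/genocchi_gf fps_mul_exp0 factS natrM.
by rewrite -[j.+1%:R * _ * _]mulrA mulrC mulKf ?pnatr_eq0.
Qed.

Lemma poly_eulerE n x : poly_euler k n x =
  \sum_(j < n.+1) 'C(n, j)%:R * poly_euler_num R k j * x ^+ (n - j).
Proof.
rewrite /poly_euler /poly_genocchi -/genocchi_gf.
have -> : fps_mul genocchi_gf (fps_exp x) n.+1
    = fps_mul (fun i => genocchi_gf i.+1) (fps_exp x) n.
  by rewrite {1}/fps_mul big_ord_recl genocchi_gf0 mul0r add0r.
rewrite factS natrM -[n.+1%:R * _ * _]mulrA mulrC mulKf ?pnatr_eq0 // fps_mul_expE.
by apply: eq_bigr => j _; rewrite poly_euler_numE.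
Qed.

Lemma poly_euler_fun_itv01 n x : 0 <= x < 1 -> poly_euler_fun k n x = poly_euler k n x.
Proof. by move=> x_itv; rewrite /poly_euler_fun (@floor_def _ _ 0) ?subr0. Qed.

End PolyEulerPolynomials.

Lemma expfz_nat_sub1 (F : fieldType) (x : F) n : x != 0 -> x ^ (n%:Z - 1) = x ^+ n / x.
Proof. by move=> x_neq0; rewrite expfzDr. Qed.

Lemma natr_div_itv01 (R : numFieldType) (a b : nat) :
  (a < b)%N -> 0 <= (a%:R / b%:R : R) < 1.
Proof.
move=> lt_ab; have b_pos : 0 < b%:R :> R by rewrite ltr0n (leq_ltn_trans _ lt_ab).
by rewrite divr_ge0 ?ler0n //= ltr_pdivrMr // mul1r ltr_nat.
Qed.

Lemma polyDC_T1E (R : archiRealFieldType) k p m : (0 < m)%N ->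
  m%:R ^+ p * polyDC_T R k p 1 m =
  \sum_(nu < p.+1) 'C(p, nu)%:R * poly_euler_num R k nu * m%:R ^ (nu%:Z - 1) *
    (2 * \sum_(1 <= mu < m) (-1) ^+ mu * mu%:R ^+ (p - nu).+1).
Proof.
move=> m_gt0; have m_pos : (0 : R) < m%:R by rewrite ltr0n.
rewrite /polyDC_T big_nat_cond.
under eq_bigr => mu /andP[/andP[_ lt_mu_m] _].
  rewrite mul1n poly_euler_fun_itv01 ?natr_div_itv01 // poly_eulerE mulr_sumr.
over.
rewrite -big_nat_cond exchange_big !mulr_sumr; apply: eq_bigr => nu _.
rewrite mulrA [RHS]mulrA !big_distrr /=; apply: eq_bigr => mu _.
have le_nu_p : (nu <= p)%N by rewrite -ltnS.
rewrite expfz_nat_sub1 ?gt_eqF // -{1}(subnK le_nu_p) exprD exprS expr_div_n.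
by field; rewrite !expf_neq0 ?gt_eqF.
Qed.

Theorem theorem10 (R : archiRealFieldType) (k : int) (p m : nat) :
  (0 < p)%N -> (0 < m)%N -> odd m ->
  polyDC_S R k p m =
  \sum_(nu < p.+1) 'C(p, nu)%:R * poly_euler_num R k nu *
    \sum_(i < (p - nu).+1) 'C((p - nu).+1, i)%:R * euler_num R i * m%:R ^+ (p - i).
Proof.
move=> _ m_gt0 m_odd; have m_neq0 : m%:R != 0 :> R by rewrite pnatr_eq0 -lt0n.
rewrite /polyDC_S polyDC_T1E // mulr_sumr -sumrB; apply: eq_bigr => nu _.
have le_nu_p : (nu <= p)%N by rewrite -ltnS.
rewrite euler_alt_power_sum_odd // subSn //.
transitivity ('C(p, nu)%:R * poly_euler_num R k nu * (m%:R ^ (nu%:Z - 1) *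
    (euler_poly (p - nu).+1 (m%:R : R) - euler_num R (p - nu).+1))); first by ring.
rewrite euler_polyS_sub_num mulr_sumr; congr (_ * _); apply: eq_bigr => i _.
have le_i_pnu : (i <= p - nu)%N by rewrite -ltnS.
rewrite expfz_nat_sub1 // subSn // exprS (_ : (p - i = p - nu - i + nu)%N); last by lia.
by rewrite exprD; field.
Qed.
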